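(* Let $n \ge 1$ and let $\varphi : \mathbb{R} \to \mathbb{R}$ be a continuous activation function that can be uniformly approximated by one-to-one functions. If a function $g : \mathbb{R}^n \to \mathbb{R}$ is approximated by the family $\mathcal{N}_{\varphi, n}$, then $g$ is approximated by the family $\mathcal{N}^*_n$ of non-singular functions.
   Context: $\mathcal{N}_{\varphi,n}$ is the family of functions $\mathbb{R}^n \to \mathbb{R}$ defined by layered feed-forward networks with activation $\varphi$, input dimension $n$, output dimension 1, any finite number of hidden layers, each of width at most $n$; such a network with layer widths $n_0=n, n_1,\dots,n_{\kappa-1}, n_\kappa=1$ computes $\nu_\kappa\circ\ell_\kappa\circ\cdots\circ\nu_0\circ\ell_0$, where the $\ell_i$ are the affine maps given by the weights between consecutive layers and each $\nu_i$ applies the activation coordinatewise. The family $\mathcal{N}^*_n$ of non-singular functions is the union, over all continuous one-to-one activation functions $\psi:\mathbb{R}\to\mathbb{R}$, of the functions computed by such networks with activation $\psi$ in which every hidden layer has width exactly $n$, every weight matrix between two consecutive width-$n$ layers (including input to first hidden layer) is nonsingular, and the weight vector from the last hidden layer to the output is nonzero. An activation $\varphi$ is uniformly approximated by one-to-one functions if some sequence of continuous one-to-one functions converges uniformly on $\mathbb{R}$ to $\varphi$. A family $M$ approximates $g$ if for every compact $A\subset\mathbb{R}^n$ and $\epsilon>0$ there is $f\in M$ with $|f(x)-g(x)|<\epsilon$ for all $x\in A$. *)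

From HB Require Import structures.
From mathcomp Require Import all_boot all_order all_algebra.
From mathcomp Require Import all_classical all_reals all_analysis.
Import numFieldNormedType.Exports.
Set Implicit Arguments. Unset Strict Implicit. Unset Printing Implicit Defensive.
Import Order.TTheory GRing.Theory Num.Theory.
Local Open Scope ring_scope.
Local Open Scope classical_set_scope.

Section Nets.
Variable R : realType.

(* [hidden_part phi n k f]: f : R^n -> R^k is the map from the input layer to
   a layer of width k of a layered feed-forward network with activation phi,
   all of whose layers (input and hidden) have width <= n. *)
Inductive hidden_part (phi : R -> R) (n : nat) :
    forall k : nat, ('rV[R]_n -> 'rV[R]_k) -> Prop :=
| hp_input : hidden_part phi (@id 'rV[R]_n)
| hp_layer (k m : nat) (f : 'rV[R]_n -> 'rV[R]_k) (W : 'M[R]_(k, m)) (b : 'rV[R]_m) :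
    (m <= n)%N -> hidden_part phi f ->
    hidden_part phi (fun x => map_mx phi (f x *m W + b)).

Definition N_family (phi : R -> R) (n : nat) : set ('rV[R]_n -> R) :=
  [set g | exists (k : nat) (f : 'rV[R]_n -> 'rV[R]_k) (w : 'cV[R]_k) (b : R),
      hidden_part phi f /\ g = (fun x => phi ((f x *m w) ord0 ord0 + b))].

Inductive ns_hidden_part (psi : R -> R) (n : nat) :
    ('rV[R]_n -> 'rV[R]_n) -> Prop :=
| nsp_input : ns_hidden_part psi (@id 'rV[R]_n)
| nsp_layer (f : 'rV[R]_n -> 'rV[R]_n) (W : 'M[R]_n) (b : 'rV[R]_n) :
    W \in unitmx -> ns_hidden_part psi f ->
    ns_hidden_part psi (fun x => map_mx psi (f x *m W + b)).

Definition Nstar_family (n : nat) : set ('rV[R]_n -> R) :=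
  [set g | exists (psi : R -> R) (f : 'rV[R]_n -> 'rV[R]_n) (w : 'cV[R]_n) (b : R),
      [/\ continuous (psi : R -> R), injective psi, ns_hidden_part psi f, w != 0 &
          g = (fun x => psi ((f x *m w) ord0 ord0 + b))]].

Definition unif_approx_by_injective (phi : R -> R) : Prop :=
  exists psi : nat -> R -> R,
    (forall k, continuous (psi k : R -> R) /\ injective (psi k)) /\
    (forall eps : R, 0 < eps -> exists N : nat, forall k, (N <= k)%N ->
        forall x : R, `|psi k x - phi x| < eps).

Definition approximates (n : nat) (M : set ('rV[R]_n -> R)) (g : 'rV[R]_n -> R) : Prop :=
  forall A : set 'rV[R]_n, compact A ->
  forall eps : R, 0 < eps ->
    exists f, M f /\ forall x, A x -> `|f x - g x| < eps.

End Nets.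

From HB Require Import structures.
From mathcomp Require Import all_boot all_order all_algebra.
From mathcomp Require Import all_classical all_reals all_analysis.
From mathcomp Require Import lra.
Import Order.TTheory GRing.Theory Num.Theory numFieldNormedType.Exports.
Set Implicit Arguments. Unset Strict Implicit. Unset Printing Implicit Defensive.
Local Open Scope ring_scope.
Local Open Scope classical_set_scope.

(* A network with hidden widths <= n is simulated layer by layer by
   non-singular psi_j-networks: a weight matrix W is padded with zeros to an
   n x n matrix and perturbed by eps_j * 1, where eps_j -> 0 is chosen so that
   the result is invertible (only finitely many eps are roots of a
   characteristic polynomial).  By induction on the layers, the first
   coordinates of the j-th simulating network converge to the original layer
   uniformly on A: everything stays bounded on A, so the perturbation is
   negligible, and psi_j (z_j) -> phi (z) uniformly because phi is uniformly
   continuous on bounded intervals.  The output weight is a column of the last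
   invertible matrix, hence nonzero. *)

Section mx_norm_entries.
Variables (K : realDomainType) (p q : nat).
Implicit Types M : 'M[K]_(p, q).

Lemma ler_mx_norm_entry M i j : `|M i j| <= `|M|.
Proof. by rewrite [`|M|]mx_normrE (le_bigmax _ _ (i, j)). Qed.

Lemma mx_norm_le M c : 0 <= c -> (forall i j, `|M i j| <= c) -> `|M| <= c.
Proof. by move=> c0 hM; rewrite [`|M|]mx_normrE; apply: bigmax_le => // -[i j]. Qed.

Lemma mx_norm_lt M c : 0 < c -> (forall i j, `|M i j| < c) -> `|M| < c.
Proof. by move=> c0 hM; rewrite [`|M|]mx_normrE; apply: bigmax_lt => // -[i j]. Qed.

End mx_norm_entries.

Lemma mx_norm_mulmx (K : realDomainType) p k q (u : 'M[K]_(p, k)) (W : 'M[K]_(k, q)) :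
  `|u *m W| <= k%:R * (`|u| * `|W|).
Proof.
apply: mx_norm_le => [|a c]; first by rewrite !mulr_ge0.
rewrite mxE; apply: le_trans (ler_norm_sum _ _ _) _.
rewrite -[k in k%:R]card_ord mulr_natl -sumr_const; apply: ler_sum => l _.
by rewrite normrM ler_pM ?ler_mx_norm_entry.
Qed.

Lemma mul_pid_mx_colsub (R : pzSemiRingType) p m n (hmn : (m <= n)%N) (u : 'M[R]_(p, n)) :
  u *m (pid_mx m : 'M[R]_(n, m)) = colsub (widen_ord hmn) u.
Proof.
have -> : pid_mx m = pid_mx n :> 'M[R]_(n, m).
  by rewrite -[RHS]pid_mx_minh (minn_idPl hmn).
by rewrite pid_mxEcol mulmx_colsub mulmx1.
Qed.

Lemma map_mx_mul_pid_mx (R : pzSemiRingType) p m n (g : R -> R) (u : 'M[R]_(p, n)) :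
  (m <= n)%N -> map_mx g (u *m pid_mx m) = map_mx g u *m (pid_mx m : 'M[R]_(n, m)).
Proof. by move=> hmn; rewrite !(mul_pid_mx_colsub hmn) map_mxsub. Qed.

Lemma norm_mul_pid_mx_le (K : realDomainType) p m n (u : 'M[K]_(p, n)) :
  (m <= n)%N -> `|u *m (pid_mx m : 'M[K]_(n, m))| <= `|u|.
Proof.
move=> hmn; rewrite (mul_pid_mx_colsub hmn).
by apply: mx_norm_le => // a i; rewrite mxE ler_mx_norm_entry.
Qed.

Definition pad_mx (R : pzSemiRingType) n k m (W : 'M[R]_(k, m)) : 'M[R]_n :=
  pid_mx k *m W *m pid_mx m.

Lemma mul_pad_mx_pid (R : comPzRingType) n k m (u : 'rV[R]_n) (W : 'M[R]_(k, m))
    (b : 'rV[R]_m) (e : R) : (m <= n)%N ->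
  (u *m (pad_mx n W + e%:M) + b *m pid_mx m) *m pid_mx m =
  u *m pid_mx k *m W + e *: (u *m pid_mx m) + b.
Proof.
move=> hmn; have Im : (pid_mx m : 'M[R]_(m, n)) *m pid_mx m = 1%:M.
  by rewrite pid_mx_id // pid_mx_1.
rewrite mulmxDr mul_mx_scalar !mulmxDl -scalemxAl /pad_mx !mulmxA.
by rewrite -!(mulmxA _ (pid_mx m)) Im !mulmx1.
Qed.

Lemma poly_nonroot_in (R : numFieldType) (p : {poly R}) d : p != 0 -> 0 < d ->
  exists2 e, 0 < e <= d & ~~ root p e.
Proof.
move=> p0 d0; pose rs := [seq d / i.+1%:R | i <- iota 0 (size p)].
have rs_uniq : uniq rs.
  rewrite map_inj_uniq ?iota_uniq // => i j /(mulfI (lt0r_neq0 d0)) /invr_inj.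
  by move/eqP; rewrite eqr_nat => /eqP [].
have /allPn [_ /mapP [i _ ->] nroot] : ~~ all (root p) rs.
  apply/negP => /(max_poly_roots p0)/(_ rs_uniq).
  by rewrite size_map size_iota ltnn.
exists (d / i.+1%:R) => //.
by rewrite divr_gt0 //= ler_pdivrMr // ler_pMr // ler1n.
Qed.

Lemma unitmx_add_scalar (R : numFieldType) n (A : 'M[R]_n) d : 0 < d ->
  exists2 e, 0 < e <= d & A + e%:M \in unitmx.
Proof.
(* [A + e%:M] is singular iff [-A] has the eigenvalue [e]. *)
move=> d0; have [e e_in nroot] := poly_nonroot_in (monic_neq0 (char_poly_monic (- A))) d0.
exists e => //; rewrite unitmxE unitfE; apply: contra nroot => /det0P [v v0].
rewrite mulmxDr mul_mx_scalar => /eqP; rewrite addr_eq0 => /eqP vA.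
by rewrite -eigenvalue_root_char; apply/eigenvalueP; exists v; rewrite // mulmxN vA opprK.
Qed.

Lemma unitmx_col_neq0 (R : fieldType) n (W : 'M[R]_n) (c : 'I_n) :
  W \in unitmx -> col c W != 0.
Proof.
rewrite unitmxE unitfE; apply: contra => /eqP Wc0.
rewrite (expand_det_col _ c) big1 // => i _.
by have /matrixP /(_ i 0) := Wc0; rewrite !mxE => ->; rewrite mul0r.
Qed.

Section real_functions.
Variable R : realType.

Lemma continuous_unif_segment (f : R -> R) (L e : R) : continuous f -> 0 < e ->
  exists2 d, 0 < d & forall s t, `|s| <= L -> `|s - t| < d -> `|f s - f t| < e.
Proof.
move=> cf e0.
have : \forall d \near 0^'+, forall s, `[- L, L] s ->
    forall t, `|s - t| < d -> `|f s - f t| < e.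
  have /compact_near_coveringP := @segment_compact R (- L) L.
  move=> /(_ R (0^'+) (fun d s => forall t, `|s - t| < d -> `|f s - f t| < e)); apply => x _.
  have e2 : 0 < e / 2 by rewrite divr_gt0.
  have /cvgr_dist_lt /(_ _ e2) /nbhs_ballP [d /= d0 hd] := cf x.
  have d2 : 0 < d / 2 by rewrite divr_gt0.
  near=> s r => t st.
  have xs : `|x - s| < d / 2.
    by near: s; apply/nbhs_ballP; exists (d / 2) => //= y; rewrite /ball /=.
  have rd : r < d / 2 by near: r; apply: nbhs_right_lt.
  have xt : `|x - t| < d.
    have := ler_normD (x - s) (s - t); rewrite addrA subrK /= in st *; lra.
  have xs' : `|x - s| < d by lra.
  have := ler_normD (f s - f x) (f x - f t); rewrite addrA subrK [`|f s - f x|]distrC.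
  by have := hd t xt; have := hd s xs'; rewrite /=; lra.
move=> ucf; near (0 : R)^'+ => d; exists d; first by near: d; exact: nbhs_right_gt.
by move=> s t hs; apply: (near ucf d) => //; rewrite /= in_itv /= -ler_norml.
Unshelve. all: end_near. Qed.

Lemma boundedP {T : Type} {V : pseudoMetricNormedZmodType R} (A : set T) (f : T -> V) :
  [bounded f x | x in A] <-> exists M, forall x, A x -> `|f x| <= M.
Proof.
split=> [/pinfty_ex_gt0 [M _ hM] | [M hM]]; first by exists M.
rewrite /bounded_near; near=> N => x Ax /=; apply: le_trans (hM x Ax) _.
by near: N; apply: nbhs_pinfty_ge; rewrite num_real.
Unshelve. all: end_near. Qed.

Lemma continuous_bounded_segment (f : R -> R) (L : R) : continuous f ->
  exists C, forall t, `|t| <= L -> `|f t| <= C.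
Proof.
move=> cf; have /compact_bounded /boundedP [C hC] :=
  continuous_compact (continuous_subspaceT cf) (@segment_compact R (- L) L).
by exists C => t ht; apply: hC; exists t; rewrite //= in_itv /= -ler_norml.
Qed.

End real_functions.

Section uniform_convergence.
Variable R : realType.

Definition unif_cvg_on {T : Type} {V : normedZmodType R} (A : set T)
    (F : nat -> T -> V) (f : T -> V) : Prop :=
  forall e, 0 < e -> \forall j \near \oo, forall x, A x -> `|F j x - f x| < e.

Lemma unif_cvg_on_entry T p q (A : set T) (Z : nat -> T -> 'M[R]_(p, q)) z i l :
  unif_cvg_on A Z z -> unif_cvg_on A (fun j x => Z j x i l) (fun x => z x i l).
Proof.
move=> Zz e e0; apply: filterS (Zz e e0) => j Zj x Ax.
have := ler_mx_norm_entry (Z j x - z x) i l; rewrite !mxE => Zjx_il.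
exact: le_lt_trans Zjx_il (Zj x Ax).
Qed.

Lemma bounded_entry T p q (A : set T) (z : T -> 'M[R]_(p, q)) i l :
  [bounded z x | x in A] -> [bounded z x i l | x in A].
Proof.
move=> /boundedP [M hM]; apply/boundedP; exists M => x Ax.
exact: le_trans (ler_mx_norm_entry _ i l) (hM x Ax).
Qed.

Lemma bounded_affine T k m (A : set T) (f : T -> 'rV[R]_k) (W : 'M[R]_(k, m)) b :
  [bounded f x | x in A] -> [bounded f x *m W + b | x in A].
Proof.
move=> /boundedP [M hM]; apply/boundedP; exists (k%:R * (M * `|W|) + `|b|) => x Ax.
apply: le_trans (ler_normD _ _) _; rewrite lerD2r.
apply: le_trans (mx_norm_mulmx _ _) _.
by rewrite ler_wpM2l // ler_wpM2r // hM.
Qed.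

Lemma bounded_map_mx T m (A : set T) (g : R -> R) (f : T -> 'rV[R]_m) :
  continuous g -> [bounded f x | x in A] -> [bounded map_mx g (f x) | x in A].
Proof.
move=> cg /boundedP [M hM]; have [C hC] := continuous_bounded_segment M cg.
apply/boundedP; exists (Num.max C 0) => x Ax.
apply: mx_norm_le => [|i j]; first by rewrite le_max lexx orbT.
rewrite mxE; apply: le_trans (hC _ (le_trans (ler_mx_norm_entry _ i j) (hM x Ax))) _.
by rewrite le_max lexx.
Qed.

Section activation_limit.
Variables (phi : R -> R) (psi : nat -> R -> R).
Hypotheses (phi_cont : continuous phi) (psi_cvg : unif_cvg_on setT psi phi).

Lemma unif_cvg_on_comp T (A : set T) (Z : nat -> T -> R) (z : T -> R) :
  [bounded z x | x in A] -> unif_cvg_on A Z z ->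
  unif_cvg_on A (fun j x => psi j (Z j x)) (fun x => phi (z x)).
Proof.
move=> /boundedP [L hL] Zz e e0; have e2 : 0 < e / 2 by rewrite divr_gt0.
have [d d0 hd] := continuous_unif_segment L phi_cont e2.
apply: filterS2 (psi_cvg e2) (Zz d d0) => j psi_j Z_j x Ax.
have := ler_normD (psi j (Z j x) - phi (Z j x)) (phi (Z j x) - phi (z x)).
rewrite addrA subrK [`|phi (Z j x) - _|]distrC.
have := hd _ (Z j x) (hL x Ax); rewrite [`|z x - _|]distrC => /(_ (Z_j x Ax)).
by have := psi_j (Z j x) I; lra.
Qed.

Lemma unif_cvg_on_map_mx T m (A : set T) (Z : nat -> T -> 'rV[R]_m) z :
  [bounded z x | x in A] -> unif_cvg_on A Z z ->
  unif_cvg_on A (fun j x => map_mx (psi j) (Z j x)) (fun x => map_mx phi (z x)).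
Proof.
move=> bz Zz e e0.
have entries_cvg : \forall j \near \oo, forall i : 'I_m, forall x, A x ->
    `|psi j (Z j x 0 i) - phi (z x 0 i)| < e.
  apply: filter_forall => i.
  exact: unif_cvg_on_comp (bounded_entry 0 i bz) (unif_cvg_on_entry 0 i Zz) _ e0.
apply: filterS entries_cvg => j Zj x Ax; apply: mx_norm_lt => // a i.
by rewrite (ord1 a) !mxE; apply: Zj.
Qed.

End activation_limit.

Lemma unif_cvg_on_pad_affine T (A : set T) n k m (F : nat -> T -> 'rV[R]_n)
    (f : T -> 'rV[R]_k) (W : 'M[R]_(k, m)) (b : 'rV[R]_m) :
  (k <= n)%N -> (m <= n)%N -> (forall j, [bounded F j x | x in A]) ->
  unif_cvg_on A (fun j x => F j x *m pid_mx k) f ->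
  exists2 W' : nat -> 'M[R]_n, (forall j, W' j \in unitmx) &
    unif_cvg_on A (fun j x => (F j x *m W' j + b *m pid_mx m) *m pid_mx m)
      (fun x => f x *m W + b).
Proof.
(* The coordinates of [F j] beyond [k] are not controlled, so [eps j] is chosen
   small against a bound [B j] of [F j] on [A]. *)
move=> hk hm Fb FPf.
have /choice [B hB] : forall j, exists B, forall x, A x -> `|F j x| <= B.
  by move=> j; apply/boundedP.
have /choice [eps heps] : forall j, exists eps : R,
    [/\ 0 < eps, eps * (`|B j| + 1) <= j.+1%:R^-1 & pad_mx n W + eps%:M \in unitmx].
  move=> j; have B1 : 0 < `|B j| + 1 by rewrite ltr_wpDl.
  have d0 : 0 < (j.+1%:R * (`|B j| + 1))^-1 by rewrite invr_gt0 mulr_gt0.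
  have [eps /andP [eps0 eps_le] Wu] := unitmx_add_scalar (pad_mx n W) d0.
  by exists eps; split => //; rewrite -ler_pdivlMr // -invfM.
exists (fun j => pad_mx n W + (eps j)%:M) => [j | e e0]; first by case: (heps j).
pose C := k%:R * `|W| + 1; have C0 : 0 < C by rewrite ltr_wpDl ?mulr_ge0.
have e2 : 0 < e / 2 by rewrite divr_gt0.
have e2C : 0 < e / 2 / C by rewrite divr_gt0.
apply: filterS2 (FPf _ e2C) (near_infty_natSinv_lt (PosNum e2)) => j FPf_j j_large x Ax.
have [eps0 eps_le _] := heps j; rewrite mul_pad_mx_pid //.
set u := F j x; rewrite opprD addrACA subrr addr0 addrAC -mulmxBl.
apply: le_lt_trans (ler_normD _ _) _.
have weight_err : `|(u *m pid_mx k - f x) *m W| <= e / 2.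
  apply: le_trans (mx_norm_mulmx _ _) _; rewrite mulrCA -[e / 2](divfK (lt0r_neq0 C0)).
  by apply: ler_pM; rewrite ?mulr_ge0 // ?ltW ?FPf_j // /C ltrDl.
have shift_err : `|eps j *: (u *m (pid_mx m : 'M[R]_(n, m)))| < e / 2.
  rewrite mx_normZ (gtr0_norm eps0); apply: le_lt_trans j_large; apply: le_trans eps_le.
  apply: ler_wpM2l; first exact: ltW.
  apply: le_trans (norm_mul_pid_mx_le _ hm) _.
  by apply: le_trans (hB j x Ax) _; rewrite ler_wpDr // real_ler_norm ?num_real.
lra.
Qed.

End uniform_convergence.

Section networks.
Variables (R : realType) (n : nat).

Lemma hidden_part_width (phi : R -> R) k (f : 'rV[R]_n -> 'rV[R]_k) :
  hidden_part phi f -> (k <= n)%N.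
Proof. by case. Qed.

Lemma hidden_part_bounded (phi : R -> R) k (f : 'rV[R]_n -> 'rV[R]_k) A :
  continuous phi -> bounded_set A -> hidden_part phi f -> [bounded f x | x in A].
Proof.
move=> phi_cont bA; elim=> // k' m f' W b _ _ f'b.
exact: bounded_map_mx phi_cont (bounded_affine W b f'b).
Qed.

Lemma ns_hidden_part_bounded (psi : R -> R) (F : 'rV[R]_n -> 'rV[R]_n) A :
  continuous psi -> bounded_set A -> ns_hidden_part psi F -> [bounded F x | x in A].
Proof.
move=> psi_cont bA; elim=> // F' W b _ _ F'b.
exact: bounded_map_mx psi_cont (bounded_affine W b F'b).
Qed.

Variables (phi : R -> R) (psi : nat -> R -> R).
Hypotheses (phi_cont : continuous phi) (psi_cont : forall j, continuous (psi j))
  (psi_inj : forall j, injective (psi j)) (psi_cvg : unif_cvg_on setT psi phi).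

(* Right multiplication by [pid_mx k] keeps the first [k] coordinates. *)
Definition ns_approximable k (A : set 'rV[R]_n) (f : 'rV[R]_n -> 'rV[R]_k) :=
  exists F : nat -> 'rV[R]_n -> 'rV[R]_n, (forall j, ns_hidden_part (psi j) (F j)) /\
    unif_cvg_on A (fun j x => F j x *m pid_mx k) f.

Lemma hidden_part_ns_approximable k (f : 'rV[R]_n -> 'rV[R]_k) A :
  bounded_set A -> hidden_part phi f -> ns_approximable A f.
Proof.
move=> bA; elim=> [|k' m f' W b hm hf' [F [hF FPf']]].
  exists (fun=> id); split=> [j | e e0]; first exact: nsp_input.
  by apply: nearW => j x _; rewrite pid_mx_1 mulmx1 subrr normr0.
have Fb j : [bounded F j x | x in A] := ns_hidden_part_bounded (@psi_cont j) bA (hF j).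
have [W' W'u Zz] := unif_cvg_on_pad_affine W b (hidden_part_width hf') hm Fb FPf'.
exists (fun j x => map_mx (psi j) (F j x *m W' j + b *m pid_mx m)).
split=> [j|]; first exact: nsp_layer.
suff -> : (fun j x => map_mx (psi j) (F j x *m W' j + b *m pid_mx m) *m pid_mx m) =
    (fun j x => map_mx (psi j) ((F j x *m W' j + b *m pid_mx m) *m pid_mx m))
    :> (nat -> 'rV[R]_n -> 'rV[R]_m).
  exact: (unif_cvg_on_map_mx phi_cont psi_cvg
    (bounded_affine W b (hidden_part_bounded phi_cont bA hf')) Zz).
by apply/funext => j; apply/funext => x; rewrite map_mx_mul_pid_mx.
Qed.

Lemma N_family_approx_by_Nstar (A : set 'rV[R]_n) G e :
  (0 < n)%N -> bounded_set A -> @N_family R phi n G -> 0 < e ->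
  exists H, @Nstar_family R n H /\ forall x, A x -> `|H x - G x| < e.
Proof.
(* The output neuron is treated as a layer of width 1. *)
move=> n0 bA [k [f [w [b [hf ->]]]]] e0.
have [F [hF FPf]] := hidden_part_ns_approximable bA hf.
have [W' W'u Zz] := unif_cvg_on_pad_affine w (const_mx b) (hidden_part_width hf) n0
  (fun j => ns_hidden_part_bounded (@psi_cont j) bA (hF j)) FPf.
have fb := bounded_affine w (const_mx b) (hidden_part_bounded phi_cont bA hf).
have [j psi_j_close] := filter_ex (unif_cvg_on_comp phi_cont psi_cvg
  (bounded_entry ord0 ord0 fb) (unif_cvg_on_entry ord0 ord0 Zz) e0).
pose c0 : 'I_n := widen_ord n0 ord0.
exists (fun x => psi j ((F j x *m col c0 (W' j)) ord0 ord0 + b)); split.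
  by exists (psi j), (F j), (col c0 (W' j)), b; split=> //; exact: unitmx_col_neq0.
move=> x Ax; have := psi_j_close x Ax.
rewrite [(f x *m w + _) _ _]mxE [const_mx b _ _]mxE.
have -> // : ((F j x *m W' j + (const_mx b : 'rV_1) *m pid_mx 1)
    *m (pid_mx 1 : 'M[R]_(n, 1))) ord0 ord0 = (F j x *m col c0 (W' j)) ord0 ord0 + b.
rewrite (mul_pid_mx_colsub n0) !mxE big_ord1 !mxE /= mulr1.
by congr (_ + _); apply: eq_bigr => l _; rewrite mxE.
Qed.

End networks.

Theorem lemma1 (R : realType) (n : nat) (phi : R -> R) (g : 'rV[R]_n -> R) :
  (0 < n)%N ->
  continuous phi ->
  unif_approx_by_injective phi ->
  @approximates R n (@N_family R phi n) g ->
  @approximates R n (@Nstar_family R n) g.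
Proof.
move=> n0 phi_cont [psi [psi_cont_inj psi_cvgN]] g_approx A A_compact e e0.
have psi_cvg : unif_cvg_on setT psi phi.
  by move=> d d0; have [N hN] := psi_cvgN d d0; exists N => // j /= hj x _; exact: hN.
have e2 : 0 < e / 2 by rewrite divr_gt0.
have [G [NG G_close]] := g_approx A A_compact _ e2.
have [H [NH H_close]] := N_family_approx_by_Nstar phi_cont
  (fun j => proj1 (psi_cont_inj j)) (fun j => proj2 (psi_cont_inj j)) psi_cvg
  n0 (compact_bounded A_compact) NG e2.
exists H; split=> // x Ax; have := ler_normD (H x - G x) (G x - g x).
by rewrite addrA subrK; have := H_close x Ax; have := G_close x Ax; lra.
Qed.
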